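(* Let $p,m,n\ge 1$ and $M>1$ be integers, let $N$ be the number of workers, and let $\mathbb{F}$ be a sufficiently large finite field. For fully private coded matrix multiplication (as described in the context) there exist linear coding schemes that achieve a recovery threshold of $2R(p,m,n)+1$.
   Context: Fully private coded matrix multiplication: given lists $\boldsymbol{A}=(A^{(1)},\dots,A^{(M)})$ with $A^{(\ell)}\in\mathbb{F}^{s\times t}$ and $\boldsymbol{B}=(B^{(1)},\dots,B^{(M)})$ with $B^{(\ell)}\in\mathbb{F}^{s\times r}$, and an index $D\in[M]$, the master wants ${A^{(D)}}^\intercal B^{(D)}$. Assume $p\mid s$, $m\mid t$, $n\mid r$; each $A^{(\ell)}$ is partitioned into a $p$-by-$m$ grid of equal-size blocks and each $B^{(\ell)}$ into a $p$-by-$n$ grid of equal-size blocks. There are $N$ workers. The master sends worker $i$ a (possibly random) query $Q_i$ depending on $D$; worker $i$ encodes $\boldsymbol{A}$ into $\tilde A_i\in\mathbb{F}^{\frac{s}{p}\times\frac{t}{m}}$ and $\boldsymbol{B}$ into $\tilde B_i\in\mathbb{F}^{\frac{s}{p}\times\frac{r}{n}}$, each a linear combination of the respective blocks with coefficients determined by $Q_i$, computes $\tilde A_i^\intercal\tilde B_i$ and returns it. The master decodes by linear combinations of the received results (coefficients may depend on $D$ and the queries). A scheme achieves recovery threshold $K$ if the master can recover ${A^{(D)}}^\intercal B^{(D)}$ from the results of any subset of $K$ workers. Privacy requirement: $I(D;Q_i,\boldsymbol{A},\boldsymbol{B})=0$ for every $i\in[N]$, where $\boldsymbol{A},\boldsymbol{B},D$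 are uniformly random. $R(p,m,n)$ denotes the bilinear complexity (tensor rank of the matrix multiplication tensor) of multiplying an $m$-by-$p$ matrix by a $p$-by-$n$ matrix. *)

From HB Require Import structures.
From mathcomp Require Import all_boot all_order all_algebra all_field.
Set Implicit Arguments. Unset Strict Implicit. Unset Printing Implicit Defensive.
Import GRing.Theory.
Local Open Scope ring_scope.

Section FPCMM.
Variable F : finFieldType.

(* A bilinear algorithm of rank r for multiplying an m-by-p matrix X by a
   p-by-n matrix Y: linear forms u_k(X) = sum_{i,j} al k i j * X i j,
   v_k(Y) = sum_{j,l} be k j l * Y j l and matrices w_k with
   X *m Y = sum_{k<r} u_k(X) v_k(Y) w_k  (a rank-r decomposition of the
   matrix multiplication tensor). *)
Definition has_bilinear_algo (p m n r : nat) : Prop :=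
  exists (al : 'I_r -> 'M[F]_(m, p)) (be : 'I_r -> 'M[F]_(p, n))
         (w : 'I_r -> 'M[F]_(m, n)),
    forall (X : 'M[F]_(m, p)) (Y : 'M[F]_(p, n)),
      X *m Y = \sum_(k < r)
        ((\sum_(i < m) \sum_(j < p) al k i j * X i j) *
         (\sum_(j < p) \sum_(l < n) be k j l * Y j l)) *: w k.

Definition is_bilinear_complexity (p m n R : nat) : Prop :=
  has_bilinear_algo p m n R /\ forall r, has_bilinear_algo p m n r -> (R <= r)%N.

(* Block (u, j) of a (p*a)-by-(m*b) matrix partitioned into a p-by-m grid of
   a-by-b blocks; row index u*a + x, column index j*b + y. *)
Definition blk (p m a b : nat) (A : 'M[F]_(p * a, m * b)) (u : 'I_p) (j : 'I_m)
  : 'M[F]_(a, b) :=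
  \matrix_(x < a, y < b) A (mxvec_index u x) (mxvec_index j y).

Definition Alist (M p m a b : nat) := {ffun 'I_M -> 'M[F]_(p * a, m * b)}.

(* A query sent to a worker: the encoding coefficients of every block of every
   A^(l) and every B^(l). *)
Definition query (M p m n : nat) :=
  ({ffun 'I_M -> 'M[F]_(p, m)} * {ffun 'I_M -> 'M[F]_(p, n)})%type.

Definition encA (M p m n a b : nat) (q : query M p m n) (A : Alist M p m a b)
  : 'M[F]_(a, b) :=
  \sum_(l < M) \sum_(u < p) \sum_(j < m) q.1 l u j *: blk (A l) u j.

Definition encB (M p m n a c : nat) (q : query M p m n) (B : Alist M p n a c)
  : 'M[F]_(a, c) :=
  \sum_(l < M) \sum_(u < p) \sum_(k < n) q.2 l u k *: blk (B l) u k.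

Definition worker_result (M p m n a b c : nat) (q : query M p m n)
  (A : Alist M p m a b) (B : Alist M p n a c) : 'M[F]_(b, c) :=
  (encA q A)^T *m encB q B.

(* Master's private randomness omega drawn uniformly from a finite nonempty
   type Omega; queries Q D omega i for the desired index D and worker i. *)
Record scheme (M N p m n : nat) := Scheme {
  Omega : finType;
  Omega_nonempty : (0 < #|Omega|)%N;
  Q : 'I_M -> Omega -> 'I_N -> query M p m n
}.

Arguments Q {M N p m n} s.

(* Sample space: D uniform in [M], omega uniform, A and B uniform and all
   independent; uniform measure on the finite product. *)
Definition sample (M N p m n a b c : nat) (S : scheme M N p m n) :=
  ('I_M * Omega S * (Alist M p m a b * Alist M p n a c))%type.

(* Privacy: I(D ; Q_i, A, B) = 0, i.e. D is statistically independent of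
   (Q_i, A, B) under the uniform product measure. *)
Definition private (M N p m n a b c : nat) (S : scheme M N p m n) : Prop :=
  forall (i : 'I_N) (d : 'I_M)
         (y : (query M p m n * (Alist M p m a b * Alist M p n a c))%type),
    let Dv := fun x : sample a b c S => x.1.1 in
    let Yv := fun x : sample a b c S => (Q S x.1.1 x.1.2 i, x.2) in
    (#|[set x : sample a b c S | (Dv x == d) && (Yv x == y)]|
       * #|[set: sample a b c S]|)%N
    = (#|[set x : sample a b c S | Dv x == d]|
       * #|[set x : sample a b c S | Yv x == y]|)%N.

(* Recovery threshold K: for every D, every realisation of the randomness and
   every set W of K workers, the master can recover A^(D)^T B^(D) blockwise as
   a linear combination of the results of the workers in W, with coefficients
   depending only on D and the queries (not on A, B). *)
Definition recovers (M N p m n a b c K : nat) (S : scheme M N p m n) : Prop :=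
  forall (d : 'I_M) (om : Omega S) (W : {set 'I_N}), #|W| = K ->
    exists coef : 'I_m -> 'I_n -> 'I_N -> F,
      forall (A : Alist M p m a b) (B : Alist M p n a c) (j : 'I_m) (k : 'I_n),
        blk ((A d)^T *m B d) j k
        = \sum_(i in W) coef j k i *: worker_result (Q S d om i) A B.

End FPCMM.

From HB Require Import structures.
From mathcomp Require Import all_boot all_order all_algebra all_field.
Set Implicit Arguments. Unset Strict Implicit. Unset Printing Implicit Defensive.
Import GRing.Theory.
Local Open Scope ring_scope.

(* Lagrange coded computing.  Fix a bilinear algorithm of rank R, i.e. linear
   forms al_r, be_r and matrices w_r with X Y = sum_r al_r(X) be_r(Y) w_r, and
   pairwise distinct points beta_1, ..., beta_R, x_1, ..., x_N.  Let
   P = prod_r (X - beta_r) and let L_r be the Lagrange basis at the beta_r.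
   Worker i gets the query P(x_i) Om + e_D sum_r L_r(x_i) al_r: a uniformly
   random query Om scaled by P(x_i) <> 0, plus the coefficients
   sum_r L_r(x_i) al_r on the blocks of A^(D) (likewise for B).  It is a
   bijective image of Om, hence uniform and independent of D.  The resulting
   encoding of A is the value at x_i of a matrix polynomial of degree R whose
   value at beta_r is al_r applied blockwise to A^(D), so worker i returns the
   value at x_i of a matrix polynomial of degree 2R.  Any 2R+1 results
   determine it by interpolation, and its values at the beta_r, weighted by
   the w_r, assemble the blocks of A^(D)^T B^(D).  The points exist once
   |F| >= N + m p n, since the naive algorithm gives R <= m p n. *)

Section Lagrange.
Variables (K : fieldType) (I : finType) (x : I -> K) (W : {set I}).
Hypothesis x_inj : injective x.

(* qpoly's [lagrange] needs sample points [x : nat -> K] injective on all of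
   nat, which no finite field admits. *)
Definition lagrange_poly (i : I) : {poly K} :=
  let p := \prod_(j in W | j != i) ('X - (x j)%:P) in p.[x i]^-1 *: p.

Lemma lagrange_poly_node i j : j \in W -> (lagrange_poly i).[x j] = (i == j)%:R.
Proof.
move=> jW; rewrite hornerZ; set p := \prod_(_ in _ | _) _.
have [<-|neq_ij] := eqVneq i j.
  rewrite mulVf // horner_prod; apply/prodf_neq0 => k /andP[_ neq_ki].
  by rewrite hornerXsubC subr_eq0 (inj_eq x_inj) eq_sym.
rewrite [p.[x j]]horner_prod (bigD1 j) /=; last by rewrite jW eq_sym.
by rewrite hornerXsubC subrr mul0r mulr0.
Qed.

Lemma size_lagrange_poly i : i \in W -> (size (lagrange_poly i) <= #|W|)%N.
Proof.
move=> iW; rewrite (leq_trans (size_scale_leq _ _)) // -big_filter.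
rewrite size_prod_XsubC size_filter (cardD1 i) iW ltnS cardE size_filter.
by apply/eq_leq/eq_count => j; rewrite !inE andbC.
Qed.

Lemma lagrange_poly_interp (g : {poly K}) : (size g <= #|W|)%N ->
  g = \sum_(i in W) g.[x i] *: lagrange_poly i.
Proof.
move=> size_g; apply/eqP; rewrite -subr_eq0; apply/eqP.
apply: (@roots_geq_poly_eq0 _ _ [seq x i | i in W]).
- apply/allP => _ /imageP[k kW ->]; rewrite /root hornerD hornerN horner_sum.
  rewrite (bigD1 k) //= big1 => [|i /andP[_ neq_ik]].
    by rewrite hornerZ lagrange_poly_node // eqxx mulr1 addr0 subrr.
  by rewrite hornerZ lagrange_poly_node // (negPf neq_ik) mulr0.
- by rewrite map_inj_uniq ?enum_uniq.
- rewrite size_map -cardE (leq_trans (size_polyD _ _)) // geq_max size_polyN size_g.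
  rewrite (leq_trans (size_sum _ _ _)) //; apply/bigmax_leqP => i iW.
  by rewrite (leq_trans (size_scale_leq _ _)) ?size_lagrange_poly.
Qed.

Lemma map_mx_lagrange_interp a b (Z : 'M[{poly K}]_(a, b)) y :
  Z \is a mxOver (poly_of_size #|W|) ->
  map_mx (horner_eval y) Z
  = \sum_(i in W) (lagrange_poly i).[y] *: map_mx (horner_eval (x i)) Z.
Proof.
move=> /mxOverP Z_W; apply/matrixP => s t; rewrite summxE mxE.
rewrite [Z s t](lagrange_poly_interp (Z_W s t)) /horner_eval horner_sum.
by apply: eq_bigr => i _; rewrite !mxE hornerZ mulrC.
Qed.

End Lagrange.

Lemma mxOver_trmul (K : nzSemiRingType) a b c s t
    (A : 'M[{poly K}]_(a, b)) (B : 'M[{poly K}]_(a, c)) :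
  A \is a mxOver (poly_of_size s) -> B \is a mxOver (poly_of_size t) ->
  A^T *m B \is a mxOver (poly_of_size (s + t).-1).
Proof.
move=> /mxOverP A_s /mxOverP B_t; apply/mxOverP => i j; rewrite mxE.
apply/rpred_sum => k _; rewrite mxE.
apply: leq_trans (size_polyMleq _ _) _; rewrite -!subn1 leq_sub2r // leq_add //.
  exact: A_s.
exact: B_t.
Qed.

Lemma sum_delta_mx_mul (T : pzSemiRingType) m p (X : 'M[T]_(m, p)) i0 j0 :
  \sum_(i < m) \sum_(j < p) delta_mx i0 j0 i j * X i j = X i0 j0.
Proof.
rewrite (bigD1 i0) //= [X in _ + X]big1 => [|i /negPf ne]; last first.
  by rewrite big1 // => j _; rewrite mxE ne mul0r.
rewrite addr0 (bigD1 j0) //= [X in _ + X]big1 => [|j /negPf ne]; last first.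
  by rewrite mxE ne andbF mul0r.
by rewrite mxE !eqxx mul1r addr0.
Qed.

Section BlockBilinear.
Variable F : finFieldType.

Definition blkcomb p m a b (A : 'M[F]_(p * a, m * b)) (C : 'M[F]_(p, m)) :
  'M[F]_(a, b) :=
  \sum_(u < p) \sum_(j < m) C u j *: blk A u j.

Fact blkcomb_is_linear p m a b (A : 'M[F]_(p * a, m * b)) : linear (blkcomb A).
Proof.
move=> k C D; rewrite /blkcomb scaler_sumr -big_split; apply: eq_bigr => u _.
rewrite scaler_sumr -big_split; apply: eq_bigr => j _.
by rewrite !mxE scalerDl scalerA.
Qed.

HB.instance Definition _ p m a b (A : 'M[F]_(p * a, m * b)) :=
  GRing.isLinear.Build F 'M[F]_(p, m) 'M[F]_(a, b) _ (blkcomb A)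
    (blkcomb_is_linear A).

Lemma blkcombE p m a b (A : 'M[F]_(p * a, m * b)) C v s :
  blkcomb A C v s = \sum_(u < p) \sum_(j < m) C u j * blk A u j v s.
Proof.
rewrite summxE; apply: eq_bigr => u _.
by rewrite summxE; apply: eq_bigr => j _; rewrite mxE.
Qed.

Lemma blk_trmul p m n a b c (A : 'M[F]_(p * a, m * b)) (B : 'M[F]_(p * a, n * c))
    j k :
  blk (A^T *m B) j k = \sum_(u < p) (blk A u j)^T *m blk B u k.
Proof.
apply/matrixP => s t; rewrite !mxE summxE.
rewrite (reindex (uncurry (@mxvec_index p a)) (curry_mxvec_bij p a)) /=.
under [RHS]eq_bigr do rewrite !mxE.
by rewrite pair_bigA; apply: eq_bigr => -[u v] _; rewrite !mxE.
Qed.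

Lemma has_bilinear_algo_naive p m n :
  has_bilinear_algo F p m n #|{: 'I_m * 'I_p * 'I_n}|.
Proof.
pose e (k : 'I_#|{: 'I_m * 'I_p * 'I_n}|) := enum_val k.
exists (fun k => delta_mx (e k).1.1 (e k).1.2).
exists (fun k => delta_mx (e k).1.2 (e k).2).
exists (fun k => delta_mx (e k).1.1 (e k).2) => X Y.
under eq_bigr do rewrite !sum_delta_mx_mul.
rewrite -(big_enum_val (fun t => (X t.1.1 t.1.2 * Y t.1.2 t.2) *: delta_mx t.1.1 t.2)).
transitivity
  (\sum_(i < m) \sum_(u < p) \sum_(l < n) (X i u * Y u l) *: delta_mx i l).
  rewrite [LHS]matrix_sum_delta; apply: eq_bigr => i _.
  by under eq_bigr do rewrite mxE scaler_suml; exact: exchange_big.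
by rewrite !pair_bigA; apply: eq_bigl.
Qed.

Definition is_bilinear_algo p m n r (al : 'I_r -> 'M[F]_(m, p))
    (be : 'I_r -> 'M[F]_(p, n)) (w : 'I_r -> 'M[F]_(m, n)) :=
  forall (X : 'M[F]_(m, p)) (Y : 'M[F]_(p, n)),
    X *m Y = \sum_(k < r)
      ((\sum_(i < m) \sum_(j < p) al k i j * X i j) *
       (\sum_(j < p) \sum_(l < n) be k j l * Y j l)) *: w k.

Lemma blk_trmul_bilinear p m n a b c r al be w :
    @is_bilinear_algo p m n r al be w ->
  forall (A : 'M[F]_(p * a, m * b)) (B : 'M[F]_(p * a, n * c)) j k,
  blk (A^T *m B) j k
  = \sum_(q < r) w q j k *: ((blkcomb A (al q)^T)^T *m blkcomb B (be q)).
Proof.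
move=> alg A B j k; apply/matrixP => s t; rewrite blk_trmul !summxE.
under eq_bigr do rewrite mxE.
under [RHS]eq_bigr do rewrite !mxE big_distrr.
rewrite exchange_big [RHS]exchange_big; apply: eq_bigr => v _ /=.
pose X := \matrix_(i < m, u < p) blk A u i v s.
pose Y := \matrix_(u < p, l < n) blk B u l v t.
have /matrixP/(_ j k) := alg X Y; rewrite !mxE summxE => XY.
transitivity (\sum_(u < p) X j u * Y u k).
  by apply: eq_bigr => u _; rewrite !mxE.
rewrite XY; apply: eq_bigr => q _; rewrite !mxE !blkcombE mulrC exchange_big /=.
by congr (_ * (_ * _)); apply: eq_bigr => ? _; apply: eq_bigr => ? _; rewrite !mxE.
Qed.

End BlockBilinear.

Lemma one_time_pad_indep (D O X : finType) (g : D -> O -> O) d (y : O * X) :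
    (forall e, injective (g e)) ->
  (#|[set s : D * O * X | (s.1.1 == d) && ((g s.1.1 s.1.2, s.2) == y)]|
     * #|[set: D * O * X]|)%N
  = (#|[set s : D * O * X | s.1.1 == d]|
     * #|[set s : D * O * X | (g s.1.1 s.1.2, s.2) == y]|)%N.
Proof.
case: y => o z g_inj; pose key e := invF (g_inj e) o.
have g_keyE e k : (g e k == o) = (k == key e).
  by rewrite /key; apply/eqP/eqP => [<-|->]; rewrite ?invF_f ?f_invF.
have -> : [set s : D * O * X | (s.1.1 == d) && ((g s.1.1 s.1.2, s.2) == (o, z))]
          = [set (d, key d, z)].
  apply/setP => -[[e k] u]; rewrite !inE /= !xpair_eqE g_keyE.
  by case: eqVneq => [->|].
have -> : [set s : D * O * X | s.1.1 == d] = setX (setX [set d] setT) setT.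
  by apply/setP => -[[e k] u]; rewrite !inE /= !andbT.
have -> : [set s : D * O * X | (g s.1.1 s.1.2, s.2) == (o, z)]
          = setX [set (e, key e) | e in D] [set z].
  apply/setP => -[[e k] u]; rewrite !inE /= xpair_eqE g_keyE.
  congr (_ && _); apply/eqP/imsetP => [->|[e' _ [<- ->]]] //.
  by exists e.
rewrite cards1 !cardsX cardsT !card_prod !cards1 !cardsT card_imset ?cardsT.
  by rewrite !mul1n muln1 [RHS]mulnC mulnA.
by move=> e1 e2 [].
Qed.

Lemma distinct_points (T : finType) N R : (N + R <= #|T|)%N ->
  exists (x : 'I_N -> T) (beta : 'I_R -> T),
    [/\ injective x, injective beta & forall i r, x i != beta r].
Proof.
move=> card_T; pose f (k : 'I_(N + R)) : T := enum_val (widen_ord card_T k).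
have f_inj : injective f.
  by move=> k1 k2 /enum_val_inj [] /val_inj.
exists (f \o lshift R), (f \o @rshift N R); split.
- by move=> i1 i2 /f_inj /lshift_inj.
- by move=> r1 r2 /f_inj /rshift_inj.
- by move=> i r; rewrite /= (inj_eq f_inj) eq_lrshift.
Qed.

Section MaskedQueries.
Variables (F : finFieldType) (M u v : nat) (d : 'I_M).

Definition mask_query (c : F) (G : 'M[F]_(u, v))
    (o : {ffun 'I_M -> 'M[F]_(u, v)}) : {ffun 'I_M -> 'M[F]_(u, v)} :=
  [ffun l => c *: o l + (l == d)%:R *: G].

Lemma mask_query_inj c G : c != 0 -> injective (mask_query c G).
Proof.
move=> c_neq0 o o' /ffunP eq_oo'; apply/ffunP => l.
by have := eq_oo' l; rewrite !ffunE => /addIr /(scalerI c_neq0).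
Qed.

Lemma blkcomb_mask_query a b c G o (A : 'I_M -> 'M[F]_(u * a, v * b)) :
  \sum_(l < M) blkcomb (A l) (mask_query c G o l)
  = c *: \sum_(l < M) blkcomb (A l) (o l) + blkcomb (A d) G.
Proof.
under eq_bigr do rewrite ffunE linearD !linearZ.
rewrite big_split scaler_sumr; congr (_ + _).
rewrite (bigD1 d) //= eqxx scale1r big1 ?addr0 // => l /negPf ->.
exact: scale0r.
Qed.

End MaskedQueries.

Lemma card_query_gt0 (F : finFieldType) M p m n :
  (0 < #|{: query F M p m n}|)%N.
Proof. by apply/card_gt0P; exists ([ffun=> 0], [ffun=> 0]). Qed.

Section LagrangeCodedScheme.
Variables (F : finFieldType) (M N p m n R : nat).
Variables (al : 'I_R -> 'M[F]_(m, p)) (be : 'I_R -> 'M[F]_(p, n)).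
Variables (x : 'I_N -> F) (beta : 'I_R -> F).
Hypotheses (beta_inj : injective beta) (x_neq_beta : forall i r, x i != beta r).

Local Notation L := (lagrange_poly beta setT).

Definition vanishing : {poly F} := \prod_(r < R) ('X - (beta r)%:P).

Lemma size_vanishing : size vanishing = R.+1.
Proof. by rewrite size_prod_XsubC [index_enum _]unlock -enumT size_enum_ord. Qed.

Lemma vanishing_beta r : vanishing.[beta r] = 0.
Proof. by rewrite horner_prod (bigD1 r) //= hornerXsubC subrr mul0r. Qed.

Lemma vanishing_x_neq0 i : vanishing.[x i] != 0.
Proof.
by rewrite horner_prod; apply/prodf_neq0 => r _; rewrite hornerXsubC subr_eq0.
Qed.

Lemma lagrange_poly_beta r q : (L r).[beta q] = (r == q)%:R.
Proof. exact: lagrange_poly_node (in_setT q). Qed.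

Definition lagrange_mx u v (C : 'I_R -> 'M[F]_(u, v)) (y : F) : 'M[F]_(u, v) :=
  \sum_(r < R) (L r).[y] *: C r.

Definition lagrange_curve u v (E : 'M[F]_(u, v)) (C : 'I_R -> 'M[F]_(u, v)) :
  'M[{poly F}]_(u, v) :=
  vanishing *: map_mx polyC E + \sum_(r < R) L r *: map_mx polyC (C r).

Lemma lagrange_curve_eval u v E (C : 'I_R -> 'M[F]_(u, v)) y :
  map_mx (horner_eval y) (lagrange_curve E C)
  = vanishing.[y] *: E + lagrange_mx C y.
Proof.
apply/matrixP => i j; rewrite !mxE /horner_eval hornerD hornerM hornerC !summxE.
rewrite horner_sum; congr (_ + _).
by apply: eq_bigr => r _; rewrite !mxE hornerM hornerC.
Qed.

Lemma lagrange_curve_beta u v E (C : 'I_R -> 'M[F]_(u, v)) q :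
  map_mx (horner_eval (beta q)) (lagrange_curve E C) = C q.
Proof.
rewrite lagrange_curve_eval vanishing_beta scale0r add0r /lagrange_mx.
rewrite (bigD1 q) //= lagrange_poly_beta eqxx scale1r big1 ?addr0 //.
by move=> r /negPf neq_rq; rewrite lagrange_poly_beta neq_rq scale0r.
Qed.

Lemma lagrange_curve_size u v E (C : 'I_R -> 'M[F]_(u, v)) :
  lagrange_curve E C \is a mxOver (poly_of_size R.+1).
Proof.
have size_L r : (size (L r) <= R.+1)%N.
  rewrite leqW // (leq_trans (size_lagrange_poly _ (in_setT r))) //.
  by rewrite cardsT card_ord.
apply/mxOverP => i j; rewrite !mxE summxE.
apply: rpredD; last apply: rpred_sum => r _; rewrite ?mxE mulrC mul_polyC.
  by apply: leq_trans (size_scale_leq _ _) _; rewrite size_vanishing.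
exact: leq_trans (size_scale_leq _ _) (size_L r).
Qed.

Definition lcc_query d (om : query F M p m n) (i : 'I_N) : query F M p m n :=
  (mask_query d vanishing.[x i] (lagrange_mx (fun r => (al r)^T) (x i)) om.1,
   mask_query d vanishing.[x i] (lagrange_mx be (x i)) om.2).

Definition lcc_scheme : scheme F M N p m n :=
  Scheme (card_query_gt0 F M p m n) lcc_query.

Lemma lcc_query_inj d i : injective (lcc_query d ^~ i).
Proof.
move=> [o1 o2] [o1' o2'] [/mask_query_inj eq1 /mask_query_inj eq2].
by rewrite eq1 ?eq2 ?vanishing_x_neq0.
Qed.

Lemma lcc_private a b c : private a b c lcc_scheme.
Proof.
move=> i d y; apply: (one_time_pad_indep (g := fun d om => lcc_query d om i)) => e.
exact: lcc_query_inj.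
Qed.

Lemma blkcomb_lcc_mask u v a b d (A : 'I_M -> 'M[F]_(u * a, v * b))
    (C : 'I_R -> 'M[F]_(u, v)) o i :
  \sum_(l < M) blkcomb (A l) (mask_query d vanishing.[x i] (lagrange_mx C (x i)) o l)
  = map_mx (horner_eval (x i)) (lagrange_curve
      (\sum_(l < M) blkcomb (A l) (o l)) (fun r => blkcomb (A d) (C r))).
Proof.
rewrite lagrange_curve_eval blkcomb_mask_query /lagrange_mx [blkcomb _ _]linear_sum.
by congr (_ + _); apply: eq_bigr => r _; rewrite linearZ_LR.
Qed.

Lemma worker_result_lcc_query a b c d om i
    (A : Alist F M p m a b) (B : Alist F M p n a c) :
  worker_result (lcc_query d om i) A B
  = map_mx (horner_eval (x i))
      ((lagrange_curve (encA om A) (fun r => blkcomb (A d) (al r)^T))^T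
       *m lagrange_curve (encB om B) (fun r => blkcomb (B d) (be r))).
Proof.
rewrite map_mxM -map_trmx -(blkcomb_lcc_mask d A (fun r => (al r)^T) om.1 i).
by rewrite -(blkcomb_lcc_mask d B be om.2 i).
Qed.

Lemma lcc_recovers w (alg : is_bilinear_algo al be w) (x_inj : injective x) a b c :
  recovers a b c (2 * R + 1) lcc_scheme.
Proof.
move=> d om W card_W; pose lW := lagrange_poly x W.
exists (fun j k i => \sum_(q < R) w q j k * (lW i).[beta q]) => A B j k.
pose Ahat r := blkcomb (A d) (al r)^T; pose Bhat r := blkcomb (B d) (be r).
pose EA := lagrange_curve (encA om A) Ahat; pose EB := lagrange_curve (encB om B) Bhat.
have EAB_size : EA^T *m EB \is a mxOver (poly_of_size #|W|).
  have -> : #|W| = (R.+1 + R.+1).-1 by rewrite card_W addn1 mul2n -addnn addSn addnS.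
  exact: mxOver_trmul (lagrange_curve_size _ _) (lagrange_curve_size _ _).
have decode q : (Ahat q)^T *m Bhat q
    = \sum_(i in W) (lW i).[beta q] *: worker_result (lcc_query d om i) A B.
  rewrite -(lagrange_curve_beta (encA om A) Ahat) -(lagrange_curve_beta (encB om B) Bhat).
  rewrite map_trmx -map_mxM (map_mx_lagrange_interp x_inj _ EAB_size).
  by apply: eq_bigr => i _; rewrite worker_result_lcc_query.
rewrite (blk_trmul_bilinear alg); under eq_bigr do rewrite decode scaler_sumr.
rewrite exchange_big /=; apply: eq_bigr => i _; rewrite scaler_suml.
by apply: eq_bigr => q _; rewrite scalerA.
Qed.

End LagrangeCodedScheme.

Unset Implicit Arguments.

Theorem theorem3 (p m n M N : nat) :
  (1 <= p)%N -> (1 <= m)%N -> (1 <= n)%N -> (1 < M)%N ->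
  exists q0 : nat,
    forall (F : finFieldType), (q0 <= #|F|)%N ->
    forall R : nat, is_bilinear_complexity F p m n R ->
    forall a b c : nat,
      exists S : scheme F M N p m n,
        private a b c S /\ recovers a b c (2 * R + 1) S.
Proof.
move=> _ _ _ _; exists (N + m * p * n)%N => F card_F R [[al [be [w alg]]] R_min] a b c.
have R_le : (R <= m * p * n)%N.
  by have := R_min _ (has_bilinear_algo_naive F p m n); rewrite !card_prod !card_ord.
have card_points : (N + R <= #|F|)%N by rewrite (leq_trans _ card_F) ?leq_add2l.
have [x [beta [x_inj beta_inj x_neq_beta]]] := distinct_points card_points.
exists (lcc_scheme M al be x beta); split.
  exact: (lcc_private (M := M) al be x_neq_beta).
exact: (lcc_recovers (M := M) beta_inj alg x_inj).
Qed.
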